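(* Let $(S,d)$ be a metric space and $\bullet\in\{\mathrm{FM},\mathrm{BL}\}$. For every molecular measure $\mu=\sum_{j=1}^n a_j\delta_{s_j}$ ($n\in\mathbb{N}$, $a_j\in\mathbb{R}$, $s_j\in S$) there exists $f^\mu_\bullet\in E^S_\bullet$ such that $\|\mu\|^*_\bullet=\int_S f^\mu_\bullet\,d\mu$.
   Context: $\mathrm{BL}(S)$ is the space of bounded real-valued Lipschitz functions on $S$, $|f|_L=\sup_{x\neq y}|f(x)-f(y)|/d(x,y)$ (with $|f|_L=0$ on a singleton), $\|f\|_{\mathrm{BL}}=\|f\|_\infty+|f|_L$, $\|f\|_{\mathrm{FM}}=\max(\|f\|_\infty,|f|_L)$, $B^S_\bullet=\{f\in\mathrm{BL}(S):\|f\|_\bullet\le1\}$, and for a finite signed measure $\mu$, $\|\mu\|^*_\bullet=\sup_{f\in B^S_\bullet}\int_S f\,d\mu$. Subsets $P\subset S$ carry the restricted metric; $\operatorname{ext}$ denotes extreme points and $\operatorname{ext}_*(B^P_\bullet)=\operatorname{ext}(B^P_\bullet)\setminus\{f:|f|=\mathbf{1}\}$. For non-empty $P\subset S$, $f\in\mathrm{BL}(P)$: $\mathcal{E}^{S,0}_P f(x)=\sup_{p\in P}[f(p)-|f|_L d(p,x)]$, $\mathcal{E}^S_P f=\max(\mathcal{E}^{S,0}_P f,-\|f\|_\infty)$. $E^S_{\mathrm{BL}}=\bigcup_{P\subset S\text{ finite}}\mathcal{E}^S_P(\operatorname{ext}_*(B^P_{\mathrm{BL}}))\cup\{\mathbf{1},-\mathbf{1}\}$;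 $E^S_{\mathrm{FM}}=\bigcup_{P\subset S\text{ finite}}\mathcal{E}^S_P(\operatorname{ext}_*(B^P_{\mathrm{FM}}))\cup\{f\in B^S_{\mathrm{FM}}:|f|=\mathbf{1}\}\cup\{h_P:P\subset S\text{ finite, non-empty}\}$, with $h_P(x)=\max\big(-1,\sup_{p\in P}[1-d(x,p)]\big)$. *)

From HB Require Import structures.
From mathcomp Require Import all_boot all_order all_algebra.
From mathcomp Require Import all_classical all_reals.


Unset Printing Implicit Defensive.
Import Order.TTheory GRing.Theory Num.Theory.
Local Open Scope ring_scope.
Local Open Scope classical_set_scope.

Inductive norm_kind := FM | BL.

Section MetricDefs.
Variable R : realType.

Definition is_metric (S : Type) (d : S -> S -> R) : Prop :=
  (forall x y, d x y = 0 <-> x = y) /\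
  (forall x y, d x y = d y x) /\
  (forall x y z, d x z <= d x y + d y z).

Section OnSpace.
Context {T : Type} (dT : T -> T -> R).

Definition sup_norm (f : T -> R) : R := sup [set `|f x| | x in [set: T]].

(* |f|_L (= 0 when T has at most one point, since sup set0 = 0) *)
Definition lip_const (f : T -> R) : R :=
  sup [set r | exists x y, x <> y /\ r = `|f x - f y| / dT x y].

Definition is_BL (f : T -> R) : Prop :=
  (exists M, forall x, `|f x| <= M) /\
  (exists L, forall x y, `|f x - f y| <= L * dT x y).

Definition normk (k : norm_kind) (f : T -> R) : R :=
  match k with
  | FM => Num.max (sup_norm f) (lip_const f)
  | BL => sup_norm f + lip_const f
  end.

Definition ball_k (k : norm_kind) (f : T -> R) : Prop :=
  is_BL f /\ normk k f <= 1.

End OnSpace.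

Definition ext_pt {T : Type} (B : (T -> R) -> Prop) (f : T -> R) : Prop :=
  B f /\ forall g h (t : R), B g -> B h -> 0 < t < 1 ->
    (forall x, f x = t * g x + (1 - t) * h x) -> (forall x, g x = h x).

Definition ext_star {T : Type} (B : (T -> R) -> Prop) (f : T -> R) : Prop :=
  ext_pt B f /\ ~ (forall x, `|f x| = 1).

Section Extension.
Context {S : Type} (d : S -> S -> R).

Definition restr_dist (P : set S) (x y : {z : S | P z}) : R :=
  d (proj1_sig x) (proj1_sig y).

Definition ext0 (P : set S) (f : {z : S | P z} -> R) (x : S) : R :=
  sup [set f q - lip_const (@restr_dist P) f * d (proj1_sig q) x
      | q in [set: {z : S | P z}]].

Definition ext_op (P : set S) (f : {z : S | P z} -> R) (x : S) : R :=
  Num.max (ext0 P f x) (- sup_norm f).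

Definition h_fun (P : set S) (x : S) : R :=
  Num.max (-1) (sup [set 1 - d x p | p in P]).

Definition E_set (k : norm_kind) (g : S -> R) : Prop :=
  match k with
  | BL =>
      (exists P : set S, finite_set P /\
         exists f, ext_star (ball_k (@restr_dist P) BL) f /\ g = ext_op P f)
      \/ g = (fun _ => 1) \/ g = (fun _ => -1)
  | FM =>
      (exists P : set S, finite_set P /\
         exists f, ext_star (ball_k (@restr_dist P) FM) f /\ g = ext_op P f)
      \/ (ball_k d FM g /\ forall x, `|g x| = 1)
      \/ (exists P : set S, finite_set P /\ P !=set0 /\ g = h_fun P)
  end.

(* molecular measure mu = sum_j a_j delta_{s_j}; integral of f *)
Definition mol_integral (n : nat) (a : 'I_n -> R) (s : 'I_n -> S) (f : S -> R) : R :=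
  \sum_(j < n) a j * f (s j).

Definition dual_norm (k : norm_kind) (n : nat) (a : 'I_n -> R) (s : 'I_n -> S) : R :=
  sup [set mol_integral n a s g | g in ball_k d k].

End Extension.
End MetricDefs.

From mathcomp Require Import all_boot all_order all_algebra.
From mathcomp Require Import all_classical all_reals all_analysis.
From mathcomp Require Import ring lra.
Import Order.TTheory GRing.Theory Num.Theory numFieldNormedType.Exports.
Local Open Scope ring_scope.
Local Open Scope classical_set_scope.

(** The molecular measure only sees the finite set Q = {s_1, ..., s_n}.  Sampling
    on Q identifies B^Q with a compact subset of R^n, on which the linear form
    v |-> sum_j a_j v_j attains its maximum; among the maximisers, one maximising
    the strictly convex |v|^2 is an extreme point of B^Q.  The McShane-type
    extension E^S_Q is norm non-increasing and agrees with f on Q, so its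
    integral against mu is the dual norm.  This extension lies in E^S unless
    |f| = 1 on Q; then f is +-1-valued, and the constants +-1 or a cone h_P over
    P = {f = 1} represent it instead. *)

Lemma sig_inj {A : Type} {P : A -> Prop} (u v : {x | P x}) : sval u = sval v -> u = v.
Proof. exact: eq_sig_hprop (fun x => @Prop_irrelevance (P x)) u v. Qed.

Section Sup.
Context {R : realType}.
Implicit Types (E : set R) (x : R).

Lemma sup_ge0 E : (forall x, E x -> 0 <= x) -> 0 <= sup E.
Proof.
move=> E0; have [[[x Ex] ubE]|/sup_out ->//] := pselect (has_sup E).
exact: le_trans (E0 _ Ex) (ub_le_sup ubE Ex).
Qed.

Lemma ge0_ge_sup {E x} : 0 <= x -> ubound E x -> sup E <= x.
Proof.
move=> x0 ubE; have [E0|E0] := pselect (E !=set0); first exact: ge_sup.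
suff -> : E = set0 by rewrite sup0.
by apply/seteqP; split=> // y Ey; apply: E0; exists y.
Qed.

Lemma sup_eq_max E x : E x -> ubound E x -> sup E = x.
Proof.
move=> Ex ubE; apply/eqP; rewrite eq_le (ge_sup (ex_intro _ x Ex) ubE) /=.
exact: ub_le_sup (ex_intro _ x ubE) _ Ex.
Qed.

Lemma norm_eq1 {x} : `|x| = 1 -> x = 1 \/ x = -1.
Proof. by move/eqP; rewrite eqr_norml => /andP[/orP[]/eqP] ->; [left|right]. Qed.

End Sup.

Section Topology.
Context {T : topologicalType} {R : realType}.

Lemma closed_forall {I : Type} (A : I -> set T) :
  (forall i, closed (A i)) -> closed [set x | forall i, A i x].
Proof.
move=> Acl; suff -> : [set x | forall i, A i x] = \bigcap_i A i by exact: closed_bigI.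
by rewrite eqEsubset; split=> x Ax i => [_|]; exact: Ax.
Qed.

Lemma closed_le_continuous (f : T -> R) (c : R) :
  continuous f -> closed [set x | f x <= c].
Proof. by move/continuous_closedP/(_ _ (@closed_le _ c)). Qed.

Lemma continuous_norm {f : T -> R} : continuous f -> continuous (fun x => `|f x|).
Proof. by move=> fc x; exact: cvg_norm (fc x). Qed.

Lemma continuous_sum {I : Type} (r : seq I) (F : I -> T -> R) :
  (forall i, continuous (F i)) -> continuous (fun x => \sum_(i <- r) F i x).
Proof.
move=> Fc; elim: r => [|i r IH].
  by under eq_fun do rewrite big_nil; exact: cst_continuous.
by under eq_fun do rewrite big_cons; move=> x; exact: continuousD (Fc i x) (IH x).
Qed.

End Topology.

Section ExtremeArgmax.
Context {R : realType} {n : nat}.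
Implicit Types (g h v w : 'rV[R]_n) (t : R).

Definition sqnorm v : R := \sum_(j < n) v ord0 j ^+ 2.

Lemma continuous_sqnorm : continuous sqnorm.
Proof.
apply: continuous_sum => j; under eq_fun do rewrite expr2.
have cj : continuous (fun v : 'rV[R]_n => v ord0 j) := @coord_continuous R 1 n ord0 j.
by move=> v; exact: continuousM (cj v) (cj v).
Qed.

Lemma sqnorm_ge0 v : 0 <= sqnorm v.
Proof. by apply: sumr_ge0 => j _; exact: sqr_ge0. Qed.

Lemma sqnorm_eq0 v : sqnorm v = 0 -> v = 0.
Proof.
move/(psumr_eq0P (fun j _ => sqr_ge0 (v ord0 j))) => v0.
by apply/rowP => j; apply/eqP; rewrite mxE -sqrf_eq0 v0.
Qed.

Lemma sqnorm_comb t g h : sqnorm (t *: g + (1 - t) *: h) =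
  t * sqnorm g + (1 - t) * sqnorm h - t * (1 - t) * sqnorm (g - h).
Proof.
rewrite /sqnorm !mulr_sumr -big_split -sumrB; apply: eq_bigr => j _.
by rewrite !mxE /=; ring.
Qed.

(** Maximise [L] on [C], then [sqnorm] on the face of maximisers: a proper
    convex combination landing there would lose some [sqnorm]. *)
Lemma compact_extreme_argmax {C : set 'rV[R]_n} {L : 'rV[R]_n -> R} :
  compact C -> C !=set0 -> continuous L ->
  (forall t g h, L (t *: g + (1 - t) *: h) = t * L g + (1 - t) * L h) ->
  exists2 v, C v & (forall w, C w -> L w <= L v) /\
    (forall t g h, C g -> C h -> 0 < t < 1 -> v = t *: g + (1 - t) *: h -> g = h).
Proof.
move=> Ccpt C0 Lc Lcomb.
have [v1 /set_mem C1 v1max] := compact_EVT_max C0 Ccpt (continuous_subspaceT Lc).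
have Mcpt : compact (C `&` [set w | L w = L v1]).
  apply: compact_closedI Ccpt _.
  by move/continuous_closedP/(_ _ (@closed_eq _ (L v1))) : Lc.
have M0 : (C `&` [set w | L w = L v1]) !=set0 by exists v1.
have [v /set_mem [Cv Lv] vmax] :=
  compact_EVT_max M0 Mcpt (continuous_subspaceT continuous_sqnorm).
exists v => //; split=> [w Cw|t g h Cg Ch /andP[t0 t1] vE].
  by rewrite Lv; exact/v1max/mem_set.
have Lg := v1max g (mem_set Cg); have Lh := v1max h (mem_set Ch).
have := Lcomb t g h; rewrite -vE Lv => Lgh.
have Lg1 : L g = L v1 by nra.
have Lh1 : L h = L v1 by nra.
have Ng := vmax g (mem_set (conj Cg Lg1)); have Nh := vmax h (mem_set (conj Ch Lh1)).
have := sqnorm_comb t g h; rewrite -vE => Ngh.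
have : t * (1 - t) * sqnorm (g - h) <= 0 by nra.
rewrite pmulr_rle0 ?mulr_gt0 ?subr_gt0 // => gh.
apply/eqP; rewrite -subr_eq0; apply/eqP/sqnorm_eq0.
by apply/le_anti; rewrite gh sqnorm_ge0.
Qed.

End ExtremeArgmax.

Section Metric.
Context {R : realType} {T : Type} {dT : T -> T -> R} (hdT : is_metric R T dT).

Lemma metric_xx x : dT x x = 0.
Proof. by case: hdT => /(_ x x) [_ ->]. Qed.

Lemma metric_sym x y : dT x y = dT y x.
Proof. by case: hdT => _ []. Qed.

Lemma metric_triangle x y z : dT x z <= dT x y + dT y z.
Proof. by case: hdT => _ []. Qed.

Lemma metric_ge0 x y : 0 <= dT x y.
Proof. by have := metric_triangle x y x; rewrite metric_xx (metric_sym y x); lra. Qed.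

Lemma metric_gt0 {x y} : x <> y -> 0 < dT x y.
Proof.
move=> xy; rewrite lt_def metric_ge0 andbT; apply/eqP => /(proj1 hdT x y).
exact: xy.
Qed.

Lemma is_metric_restr (P : set T) : is_metric R {z | P z} (restr_dist R dT P).
Proof.
split; [|split] => [x y|x y|x y z]; rewrite /restr_dist.
- by split=> [/(proj1 hdT) /sig_inj|->] //; exact: metric_xx.
- exact: metric_sym.
- exact: metric_triangle.
Qed.

End Metric.

Section Norms.
Context {R : realType} {T : Type} {dT : T -> T -> R}.
Implicit Types f : T -> R.

Lemma sup_norm_ge0 f : 0 <= sup_norm R f.
Proof. by apply: sup_ge0 => _ [x _ <-]. Qed.

Lemma le_sup_norm {f} : is_BL R dT f -> forall x, `|f x| <= sup_norm R f.
Proof.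
move=> [[M fM] _] x.
have ubM : ubound [set `|f y| | y in [set: T]] M by move=> _ [y _ <-].
by apply: (ub_le_sup (ex_intro _ M ubM)); exists x.
Qed.

Lemma sup_norm_le {f c} : 0 <= c -> (forall x, `|f x| <= c) -> sup_norm R f <= c.
Proof. by move=> c0 fc; apply: ge0_ge_sup => // _ [x _ <-]. Qed.

Hypothesis hdT : is_metric R T dT.

Lemma lip_const_ge0 f : 0 <= lip_const R dT f.
Proof.
apply: sup_ge0 => _ [x [y [_ ->]]].
by apply: divr_ge0 => //; exact: metric_ge0.
Qed.

Lemma le_lip_const {f} : is_BL R dT f ->
  forall x y, `|f x - f y| <= lip_const R dT f * dT x y.
Proof.
move=> [_ [L fL]] x y; have [<-|xy] := pselect (x = y).
  by rewrite subrr normr0 metric_xx // mulr0.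
rewrite -ler_pdivrMr ?metric_gt0 //.
have ubL : ubound [set r | exists x y, x <> y /\ r = `|f x - f y| / dT x y] L.
  by move=> _ [u [v [uv ->]]]; rewrite ler_pdivrMr ?metric_gt0.
by apply: (ub_le_sup (ex_intro _ L ubL)); exists x, y.
Qed.

Lemma lip_const_le {f L} : 0 <= L ->
  (forall x y, `|f x - f y| <= L * dT x y) -> lip_const R dT f <= L.
Proof.
move=> L0 fL; apply: ge0_ge_sup => // _ [x [y [xy ->]]].
by rewrite ler_pdivrMr ?metric_gt0.
Qed.

End Norms.

Lemma normk_le {R : realType} {T T' : Type} (dT : T -> T -> R) (dT' : T' -> T' -> R)
    k (f : T -> R) (g : T' -> R) :
  sup_norm R f <= sup_norm R g -> lip_const R dT f <= lip_const R dT' g ->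
  normk R dT k f <= normk R dT' k g.
Proof. by case: k => /= fg Lfg; [exact: le_max2|exact: lerD]. Qed.

Section BallIneq.
Context {R : realType}.

(** The unit ball of [normk] as pointwise inequalities; the [BL] condition is
    [sup |f| + |f|_L <= 1] multiplied out, so that it also makes sense when
    [dT] is only a pseudometric. *)
Definition ball_ineq (k : norm_kind) {T : Type} (dT : T -> T -> R) (f : T -> R) : Prop :=
  (forall x, `|f x| <= 1) /\
  match k with
  | FM => forall x y, `|f x - f y| <= dT x y
  | BL => forall q x y, `|f q| * dT x y + `|f x - f y| <= dT x y
  end.

Lemma ball_ineq_comp {k T T'} {dT : T -> T -> R} (phi : T' -> T) {f : T -> R} :
  ball_ineq k dT f -> ball_ineq k (fun x y => dT (phi x) (phi y)) (f \o phi).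
Proof. by case: k => -[f1 f2]; split=> *; [exact: f1|exact: f2|exact: f1|exact: f2]. Qed.

Lemma ball_ineq_eq {k T} {dT : T -> T -> R} {f : T -> R} {x y} :
  ball_ineq k dT f -> dT x y = 0 -> f x = f y.
Proof.
move=> [_ fL] dxy; apply/eqP; rewrite -subr_eq0 -normr_le0.
by case: k fL => fL; [have := fL x y|have := fL x x y]; rewrite dxy ?mulr0 ?add0r.
Qed.

Lemma ball_ineq_cst k {T : Type} (dT : T -> T -> R) (c : R) :
  `|c| <= 1 -> (forall x y, 0 <= dT x y) -> ball_ineq k dT (fun _ => c).
Proof.
move=> c1 d0; case: k; split=> // *; rewrite subrr normr0 ?addr0 //.
exact: ler_piMl.
Qed.

End BallIneq.

Section BallIneqMetric.
Context {R : realType} {T : Type} {dT : T -> T -> R} (hdT : is_metric R T dT).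
Implicit Types f : T -> R.

Lemma ball_ineq_ball_k k f : ball_k R dT k f -> ball_ineq k dT f.
Proof.
move=> [fBL fk]; have Lip x y := le_lip_const hdT fBL x y.
have d0 x y := metric_ge0 hdT x y.
case: k fk => /= fk.
  move: fk; rewrite ge_max => /andP[c1 L1]; split=> [x|x y].
    exact: le_trans (le_sup_norm fBL x) c1.
  exact: le_trans (Lip x y) (ler_piMl (d0 x y) L1).
have L0 := lip_const_ge0 hdT f.
split=> [x|q x y]; first by have := le_sup_norm fBL x; lra.
have := ler_wpM2r (d0 x y) (le_sup_norm fBL q).
by have := ler_piMl (d0 x y) fk; have := Lip x y; nra.
Qed.

Lemma BL_norm_le1 f : (forall x, `|f x| <= 1) ->
  (forall q x y, `|f q| * dT x y + `|f x - f y| <= dT x y) ->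
  sup_norm R f + lip_const R dT f <= 1.
Proof.
move=> f1 fL; have c1 := sup_norm_le ler01 f1.
suff : lip_const R dT f <= 1 - sup_norm R f by lra.
apply: (lip_const_le hdT) => [|x y]; first by lra.
have [<-|xy] := pselect (x = y); first by rewrite subrr normr0 metric_xx // mulr0.
have dxy := metric_gt0 hdT xy; set r := `|f x - f y| / dT x y.
have rd : r * dT x y = `|f x - f y| by rewrite divfK ?gt_eqF.
have fr q : `|f q| + r <= 1 by rewrite -(ler_pM2r dxy) mulrDl rd mul1r fL.
have : sup_norm R f <= 1 - r.
  by apply: sup_norm_le => [|q]; [have := fr x; have := normr_ge0 (f x)|have := fr q]; lra.
by rewrite -rd ler_pM2r //; lra.
Qed.

Lemma ball_k_ball_ineq k f : ball_ineq k dT f -> ball_k R dT k f.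
Proof.
move=> [f1 fL]; have fL1 x y : `|f x - f y| <= dT x y.
  case: k fL => fL; first exact: fL.
  by have := fL x x y; have := normr_ge0 (f x); have := metric_ge0 hdT x y; nra.
split; first by split; [exists 1|exists 1 => x y; rewrite mul1r].
case: k fL => /= fL; last exact: BL_norm_le1.
rewrite ge_max (sup_norm_le ler01 f1) /=.
by apply: (lip_const_le hdT ler01) => x y; rewrite mul1r.
Qed.

Lemma ball_kP k f : ball_k R dT k f <-> ball_ineq k dT f.
Proof. by split; [exact: ball_ineq_ball_k|exact: ball_k_ball_ineq]. Qed.

End BallIneqMetric.



Section Extension.
Context {R : realType} {S : Type} {d : S -> S -> R} (hd : is_metric R S d).
Context {P : set S} {f : {z | P z} -> R} (hf : is_BL R (restr_dist R d P) f).
Local Notation c := (sup_norm R f).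
Local Notation L := (lip_const R (restr_dist R d P) f).
Let hrd := is_metric_restr hd P.

Lemma ext0_ubound x : ubound [set f q - L * d (sval q) x | q in [set: {z | P z}]] c.
Proof.
move=> _ [q _ <-]; have := le_sup_norm hf q; have := ler_norm (f q).
by have := mulr_ge0 (lip_const_ge0 hrd f) (metric_ge0 hd (sval q) x); lra.
Qed.

Lemma ext0_le x : ext0 R d P f x <= c.
Proof. exact: ge0_ge_sup (sup_norm_ge0 f) (ext0_ubound x). Qed.

Lemma ext0_lipschitz x y : ext0 R d P f x <= ext0 R d P f y + L * d x y.
Proof.
have Ld := mulr_ge0 (lip_const_ge0 hrd f) (metric_ge0 hd x y).
have [[q0 _]|noP] := pselect (exists q : {z | P z}, True); last first.
  have E0 z : [set f q - L * d (sval q) z | q in [set: {z | P z}]] = set0.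
    by apply/seteqP; split=> // r [q _ _]; case: noP; exists q.
  by rewrite /ext0 !E0 sup0 add0r.
apply: ge_sup; first by exists (f q0 - L * d (sval q0) x), q0.
move=> _ [q _ <-].
have : f q - L * d (sval q) y <= ext0 R d P f y.
  by apply: (ub_le_sup (ex_intro _ c (ext0_ubound y))); exists q.
have : L * d (sval q) y <= L * d (sval q) x + L * d x y.
  by rewrite -mulrDr ler_wpM2l ?lip_const_ge0 ?(metric_triangle hd).
lra.
Qed.

Lemma ext_op_restr z : ext_op R d P f (sval z) = f z.
Proof.
have e0 : ext0 R d P f (sval z) = f z.
  apply: sup_eq_max; first by exists z => //; rewrite metric_xx // mulr0 subr0.
  move=> _ [q _ <-]; have := le_lip_const hrd hf q z; rewrite /restr_dist.
  by have := ler_norm (f q - f z); lra.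
rewrite /ext_op e0 max_l //.
by have := le_sup_norm hf z; rewrite ler_norml => /andP[].
Qed.

Lemma normr_ext_op x : `|ext_op R d P f x| <= c.
Proof.
rewrite ler_norml /ext_op le_max lexx orbT ge_max ext0_le /=.
by have := sup_norm_ge0 f; lra.
Qed.

Lemma ext_op_lipschitz x y : `|ext_op R d P f x - ext_op R d P f y| <= L * d x y.
Proof.
have side u v : ext_op R d P f u <= ext_op R d P f v + L * d u v.
  have Ld := mulr_ge0 (lip_const_ge0 hrd f) (metric_ge0 hd u v).
  rewrite /ext_op ge_max (le_trans (ext0_lipschitz u v)) ?lerD2r ?le_max ?lexx //=.
  apply: (le_trans (y := Num.max (ext0 R d P f v) (- c))); last by rewrite lerDl.
  by rewrite le_max lexx orbT.
by rewrite ler_norml; have := side x y; have := side y x; rewrite (metric_sym hd y); lra.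
Qed.

End Extension.

Lemma ball_ext_op {R : realType} {S : Type} {d : S -> S -> R} (hd : is_metric R S d)
    {P : set S} k (f : {z | P z} -> R) :
  ball_k R (restr_dist R d P) k f -> ball_k R d k (ext_op R d P f).
Proof.
move=> [fBL fk]; have hrd := is_metric_restr hd P.
have Lip := ext_op_lipschitz hd fBL; have c0 := sup_norm_ge0 f.
split.
  by split; [exists (sup_norm R f); exact: normr_ext_op|exists (lip_const R (restr_dist R d P) f)].
apply: le_trans fk; apply: normk_le; first exact: (sup_norm_le c0 (normr_ext_op hd fBL)).
exact: (lip_const_le hd (lip_const_ge0 hrd f) Lip).
Qed.

Section Sampling.
Context {R : realType} {S : Type} {d : S -> S -> R} (hd : is_metric R S d).
Context {n : nat} (a : 'I_n -> R) (s : 'I_n -> S).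
Local Notation Q := (range s).
Local Notation rd := (restr_dist R d Q).
Local Notation ds := (fun i j => d (s i) (s j)).

Definition range_pt (j : 'I_n) : {z | Q z} := exist _ (s j) (imageT s j).

Definition range_idx (z : {z | Q z}) : 'I_n := s2val (cid2 (svalP z)).

Lemma s_range_idx z : s (range_idx z) = sval z.
Proof. by rewrite /range_idx; case: cid2. Qed.

Lemma range_pt_idx z : range_pt (range_idx z) = z.
Proof. exact/sig_inj/s_range_idx. Qed.

Definition pairing (v : 'rV[R]_n) : R := \sum_(j < n) a j * v ord0 j.

Lemma continuous_pairing : continuous pairing.
Proof.
apply: continuous_sum => j.
have aj : continuous (fun _ : 'rV[R]_n => a j) by move=> ?; exact: cst_continuous.
have vj : continuous (fun v : 'rV[R]_n => v ord0 j) := @coord_continuous R 1 n ord0 j.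
by move=> v; exact: continuousM (aj v) (vj v).
Qed.

Lemma pairing_comb t g h :
  pairing (t *: g + (1 - t) *: h) = t * pairing g + (1 - t) * pairing h.
Proof.
rewrite /pairing !mulr_sumr -big_split; apply: eq_bigr => j _.
by rewrite !mxE /=; ring.
Qed.

Lemma mol_integralE g : mol_integral R n a s g = pairing (\row_j g (s j)).
Proof. by apply: eq_bigr => j _; rewrite mxE. Qed.

(** No consistency constraint is needed for repeated points [s i = s j]: the
    inequalities force equal values there ([ball_ineq_eq]). *)
Definition sample_ball k : set 'rV[R]_n :=
  [set v | ball_ineq k ds (fun j => v ord0 j)].

Lemma sample_ball_row k (g : 'I_n -> R) : sample_ball k (\row_j g j) <-> ball_ineq k ds g.
Proof.
rewrite /sample_ball /=; suff -> : (\row_j g j) ord0 = g by [].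
by apply/funext => j; rewrite mxE.
Qed.

Lemma compact_sample_ball k : compact (sample_ball k).
Proof.
have coord j : continuous (fun v : 'rV[R]_n => v ord0 j) := @coord_continuous R 1 n ord0 j.
have dist i j : continuous (fun v : 'rV[R]_n => `|v ord0 i - v ord0 j|).
  by apply: continuous_norm => v; exact: continuousB (coord i v) (coord j v).
apply: (subclosed_compact _ (rV_compact (fun=> @segment_compact R (-1) 1))).
  case: k; apply: closedI.
  - by apply: closed_forall => j; apply: closed_le_continuous; exact: continuous_norm.
  - by apply: closed_forall => i; apply: closed_forall => j; exact: closed_le_continuous.
  - by apply: closed_forall => j; apply: closed_le_continuous; exact: continuous_norm.
  apply: closed_forall => q; apply: closed_forall => i; apply: closed_forall => j.
  have dij : continuous (fun _ : 'rV[R]_n => d (s i) (s j)) by move=> ?; exact: cst_continuous.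
  have qij : continuous (fun v : 'rV[R]_n => `|v ord0 q| * d (s i) (s j)).
    have nq : continuous (fun v : 'rV[R]_n => `|v ord0 q|) := continuous_norm (coord q).
    by move=> v; exact: continuousM (nq v) (dij v).
  by apply: closed_le_continuous => v; exact: continuousD (qij v) (dist i j v).
by move=> v [v1 _] j; rewrite /= in_itv /= -ler_norml.
Qed.

Lemma sample_ball_ball {k g} : ball_k R d k g -> sample_ball k (\row_j g (s j)).
Proof. by move=> /(ball_kP hd) /(ball_ineq_comp s) gB; apply/sample_ball_row. Qed.

Lemma sample_ball_restr {k f} : ball_k R rd k f -> sample_ball k (\row_j f (range_pt j)).
Proof.
move=> /(ball_kP (is_metric_restr hd Q)) /(ball_ineq_comp range_pt) fB.
exact/sample_ball_row.
Qed.

Definition unsample (v : 'rV[R]_n) (z : {z | Q z}) : R := v ord0 (range_idx z).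

Lemma unsample_range_pt {k v} j : sample_ball k v -> unsample v (range_pt j) = v ord0 j.
Proof. by move=> vB; apply: (ball_ineq_eq vB); rewrite /= s_range_idx metric_xx. Qed.

Lemma ball_unsample {k v} : sample_ball k v -> ball_k R rd k (unsample v).
Proof.
move=> vB; apply/(ball_kP (is_metric_restr hd Q)).
suff -> : rd = (fun x y => ds (range_idx x) (range_idx y)) by exact: ball_ineq_comp vB.
by apply/funext => x; apply/funext => y; rewrite /= !s_range_idx.
Qed.

Lemma mol_integral_unsample {k v g} : sample_ball k v ->
  (forall z, g (sval z) = unsample v z) -> mol_integral R n a s g = pairing v.
Proof.
move=> vB gv; rewrite mol_integralE; congr pairing.
by apply/rowP => j; rewrite mxE -(unsample_range_pt j vB) -gv.
Qed.

Lemma ext_pt_unsample {k v} : sample_ball k v ->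
  (forall t g h, sample_ball k g -> sample_ball k h -> 0 < t < 1 ->
    v = t *: g + (1 - t) *: h -> g = h) ->
  ext_pt R (ball_k R rd k) (unsample v).
Proof.
move=> vB vext; split=> [|g h t gB hB t01 vE z]; first exact: ball_unsample.
have gh : \row_j g (range_pt j) = \row_j h (range_pt j).
  apply: (vext t _ _ (sample_ball_restr gB) (sample_ball_restr hB) t01).
  by apply/rowP => j; rewrite !mxE -(unsample_range_pt j vB) vE.
by move/rowP/(_ (range_idx z)): gh; rewrite !mxE range_pt_idx.
Qed.

Lemma dual_norm_unsample {k v} : sample_ball k v ->
  (forall w, sample_ball k w -> pairing w <= pairing v) ->
  forall g, (forall z, g (sval z) = unsample v z) ->
    dual_norm R d k n a s = mol_integral R n a s g.
Proof.
move=> vB vmax g gv; rewrite (mol_integral_unsample vB gv); apply: sup_eq_max.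
  exists (ext_op R d Q (unsample v)); first exact/ball_ext_op/ball_unsample.
  exact/(mol_integral_unsample vB)/(ext_op_restr hd (ball_unsample vB).1).
by move=> _ [h hB <-]; rewrite mol_integralE; exact/vmax/sample_ball_ball.
Qed.

Lemma dual_norm_extreme k : exists f : {z | Q z} -> R,
  ext_pt R (ball_k R rd k) f /\
  forall g : S -> R, (forall z, g (sval z) = f z) ->
    dual_norm R d k n a s = mol_integral R n a s g.
Proof.
have ball0 : ball_k R d k (fun _ => 0).
  by apply/(ball_kP hd)/ball_ineq_cst; [rewrite normr0|exact: metric_ge0].
have [v vB [vmax vext]] := compact_extreme_argmax (compact_sample_ball k)
  (ex_intro _ _ (sample_ball_ball ball0)) continuous_pairing pairing_comb.
by exists (unsample v); split; [exact: ext_pt_unsample|exact: dual_norm_unsample].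
Qed.

End Sampling.

Section ESet.
Context {R : realType} {S : Type} {d : S -> S -> R} (hd : is_metric R S d).
Context {P : set S} (Pfin : finite_set P).
Local Notation rd := (restr_dist R d P).

Lemma E_set_ext_op {k f} : ext_star R (ball_k R rd k) f -> E_set R d k (ext_op R d P f).
Proof. by case: k => fext; left; exists P; split=> //; exists f. Qed.

Lemma E_set_unimodular_BL {f} : ball_k R rd BL f -> (forall z, `|f z| = 1) ->
  exists g, E_set R d BL g /\ forall z, g (sval z) = f z.
Proof.
move=> /(ball_kP (is_metric_restr hd P)) [_ fL] f1.
have [[z0 _]|noP] := pselect (exists z : {z | P z}, True); last first.
  by exists (fun _ => 1); split=> [|z]; [right; left|case: noP; exists z].
exists (fun _ => f z0); split.
  by right; case: (norm_eq1 (f1 z0)) => ->; [left|right].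
move=> z; have := fL z0 z z0; rewrite f1 mul1r gerDl normr_le0 subr_eq0.
by move/eqP.
Qed.

(** If [f] takes the value [1], it is the cone [h_P] over [P1 = {f = 1}]: points
    where [f = -1] are at distance at least [2] from [P1]. *)
Lemma E_set_unimodular_FM {f} : ball_k R rd FM f -> (forall z, `|f z| = 1) ->
  exists g, E_set R d FM g /\ forall z, g (sval z) = f z.
Proof.
move=> /(ball_kP (is_metric_restr hd P)) [_ fL] f1.
pose P1 := [set sval z | z in [set z | f z = 1]].
have [[p0 P1p0]|noP1] := pselect (P1 !=set0); last first.
  have fm1 z : f z = -1.
    by case: (norm_eq1 (f1 z)) => // fz; case: noP1; exists (sval z), z.
  exists (fun _ => -1); split => //; right; left; split=> [|x]; last by rewrite normrN1.
  by apply/(ball_kP hd)/ball_ineq_cst; [rewrite normrN1|exact: metric_ge0].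
exists (h_fun R d P1); split.
  right; right; exists P1; split; last by split=> //; exists p0.
  by apply: sub_finite_set Pfin => _ [z _ <-]; exact: svalP.
move=> z; rewrite /h_fun; case: (norm_eq1 (f1 z)) => fz; rewrite fz.
  have -> : sup [set 1 - d (sval z) p | p in P1] = 1.
    apply: sup_eq_max; first by exists (sval z); [exists z|rewrite metric_xx // subr0].
    by move=> _ [p _ <-]; have := metric_ge0 hd (sval z) p; lra.
  by rewrite max_r //; lra.
rewrite max_l //; apply: ge_sup; first by exists (1 - d (sval z) p0), p0.
move=> _ [_ [w fw <-] <-]; have := fL w z; rewrite fw fz /restr_dist (metric_sym hd (sval w)).
by rewrite opprK ger0_norm //; lra.
Qed.

Lemma E_set_unimodular {k f} : ball_k R rd k f -> (forall z, `|f z| = 1) ->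
  exists g, E_set R d k g /\ forall z, g (sval z) = f z.
Proof. by case: k; [exact: E_set_unimodular_FM|exact: E_set_unimodular_BL]. Qed.

End ESet.

Theorem proposition5p4 (R : realType) (S : Type) (d : S -> S -> R)
  (hd : is_metric R S d) (k : norm_kind) (n : nat) (a : 'I_n -> R) (s : 'I_n -> S) :
  exists f : S -> R, E_set R d k f /\ dual_norm R d k n a s = mol_integral R n a s f.
Proof.
have [f [fext dualE]] := dual_norm_extreme hd a s k.
have Qfin : finite_set (range s) := finite_image s finite_finset.
have [f1|fn1] := pselect (forall z, `|f z| = 1).
  have [g [Eg gf]] := E_set_unimodular hd Qfin fext.1 f1.
  by exists g; split=> //; exact: dualE.
exists (ext_op R d (range s) f); split; first exact: E_set_ext_op.
by apply: dualE; exact: (ext_op_restr hd fext.1.1).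
Qed.
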